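(* Let $u$ be a dissipative weak solution of the Camassa–Holm system, let $C:=\sup_{t\ge0}\int_{\mathbb{R}}\big(u^2+\frac12u_x^2\big)(t,y)\,dy$, fix $0<T<\frac{\pi}{8\sqrt{C}}$, and let $u^{Tb}(t,x):=-u(T-t,x)$. For almost every $\gamma\in\Gamma:=\bigcup_{K\ge1}\Gamma^K$ the characteristic $\gamma(\cdot)$ of $u^{Tb}$ from $\gamma$ is unique forwards on $[0,T]$.
   Context: Camassa–Holm system: $\partial_t u + \partial_x(u^2/2)+P_x=0$, $P(t,x)=\frac12\int_{\mathbb{R}} e^{-|x-y|}\big(u^2(t,y)+\frac12u_x^2(t,y)\big)dy$, $P_x(t,x)=\frac12\int_{\mathbb{R}}\mathrm{sgn}(y-x)e^{-|x-y|}\big(u^2+\frac12u_x^2\big)(t,y)\,dy$, $u(0,\cdot)=u_0\in H^1(\mathbb{R})$. A weak solution is $u\in C([0,\infty)\times\mathbb{R})\cap L^\infty([0,\infty),H^1(\mathbb{R}))$ with $u(0,\cdot)=u_0$ solving the equation in the sense of distributions; it is dissipative if $u_x(t,x)\le c(1+1/t)$ for some constant $c$ and $\|u(t,\cdot)\|_{H^1}\le\|u(0,\cdot)\|_{H^1}$ for all $t>0$. A characteristic of $u^{Tb}$ from $\gamma$: $\gamma(\cdot):[0,T]\to\mathbb{R}$ with $\gamma(0)=\gamma$, $\frac{d}{dt}\gamma(t)=u^{Tb}(t,\gamma(t))$, $\frac{d}{dt}u^{Tb}(t,\gamma(t))=-P^{Tb}_x(t,\gamma(t))$, $P^{Tb}_x$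 being $P_x$ computed with $u^{Tb}$. Unique forwards on $[0,T]$: all characteristics of $u^{Tb}$ from $\gamma$ coincide on $[0,T]$. $\omega^{\gamma,\kappa}(s)=\frac{u^{Tb}(s,\kappa(s))-u^{Tb}(s,\gamma(s))}{\kappa(s)-\gamma(s)}$. $\Gamma^K$: the set of $\gamma$ such that $u^{Tb}(0,\cdot)$ is differentiable at $\gamma$ and $\omega^{\gamma,\kappa}(s)\ge-K$ for every characteristic $\gamma(\cdot)$ of $u^{Tb}$ from $\gamma$, every $\kappa\in(\gamma-1/K,\gamma)\cup(\gamma,\gamma+1/K)$, every characteristic $\kappa(\cdot)$ of $u^{Tb}$ from $\kappa$ and every $s\in[0,T]$. *)

From HB Require Import structures.
From mathcomp Require Import all_boot all_order all_algebra.
From mathcomp Require Import all_classical all_reals all_analysis.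
Set Implicit Arguments. Unset Strict Implicit. Unset Printing Implicit Defensive.
Import Order.TTheory GRing.Theory Num.Theory.
Import numFieldNormedType.Exports.
Local Open Scope classical_set_scope.
Local Open Scope ring_scope.

Section CH.
Variable R : realType.
Local Notation mu := (@lebesgue_measure R).

Definition smooth1 (phi : R -> R) : Prop :=
  forall n : nat, forall x : R, derivable (derive1n n phi) x 1.

Definition compact_support1 (phi : R -> R) : Prop :=
  exists M : R, forall x, phi x != 0 -> `|x| <= M.

(* iterated partial derivatives of a function of (t,x); true = d/dt, false = d/dx *)
Fixpoint dpart (w : seq bool) (phi : R -> R -> R) : R -> R -> R :=
  match w with
  | [::] => phi
  | b :: w' => let psi := dpart w' phi in
      if b then (fun t x => derive1 (fun s => psi s x) t)
           else (fun t x => derive1 (fun y => psi t y) x)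
  end.

Definition dt (phi : R -> R -> R) := dpart [:: true] phi.
Definition dx (phi : R -> R -> R) := dpart [:: false] phi.

Definition smooth2 (phi : R -> R -> R) : Prop :=
  forall w : seq bool,
    (forall t x, derivable (fun s => dpart w phi s x) t 1 /\
                 derivable (fun y => dpart w phi t y) x 1) /\
    continuous (fun p : R * R => dpart w phi p.1 p.2).

Definition compact_support_pos (phi : R -> R -> R) : Prop :=
  exists a b M : R, 0 < a /\ forall t x, phi t x != 0 -> a <= t <= b /\ `|x| <= M.

Definition weak_deriv (f fx : R -> R) : Prop :=
  forall phi : R -> R, smooth1 phi -> compact_support1 phi ->
    \int[mu]_(x in setT) (f x * derive1 phi x) = - \int[mu]_(x in setT) (fx x * phi x).

Definition H1 (f fx : R -> R) : Prop :=
  measurable_fun setT f /\ measurable_fun setT fx /\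
  mu.-integrable setT (fun x => (f x ^+ 2)%:E) /\
  mu.-integrable setT (fun x => (fx x ^+ 2)%:E) /\
  weak_deriv f fx.

Definition H1norm (f fx : R -> R) : R :=
  Num.sqrt (\int[mu]_(x in setT) (f x ^+ 2 + fx x ^+ 2)).

Definition Px (u ux : R -> R -> R) (t x : R) : R :=
  2^-1 * \int[mu]_(y in setT)
     (Num.sg (y - x) * expR (- `|x - y|) * (u t y ^+ 2 + 2^-1 * ux t y ^+ 2)).

Definition energy (u ux : R -> R -> R) (t : R) : R :=
  \int[mu]_(y in setT) (u t y ^+ 2 + 2^-1 * ux t y ^+ 2).

Definition CH_C (u ux : R -> R -> R) : R :=
  sup [set energy u ux t | t in [set t : R | 0 <= t]].

(* u : (t,x) |-> u(t,x), with ux(t,.) the weak x-derivative of u(t,.).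
   u in C([0,oo) x R) /\ L^oo([0,oo),H^1), solving the equation in D'((0,oo) x R);
   the initial datum is u0 := u(0,.) *)
Definition weak_solution (u ux : R -> R -> R) : Prop :=
  {within [set p : R * R | 0 <= p.1], continuous (fun p : R * R => u p.1 p.2)} /\
  (forall t, 0 <= t -> H1 (u t) (ux t)) /\
  (exists M : R, forall t, 0 <= t -> H1norm (u t) (ux t) <= M) /\
  (forall phi : R -> R -> R, smooth2 phi -> compact_support_pos phi ->
     \int[(mu \x mu)%E]_(p in setT)
        (u p.1 p.2 * dt phi p.1 p.2 + 2^-1 * u p.1 p.2 ^+ 2 * dx phi p.1 p.2
         - Px u ux p.1 p.2 * phi p.1 p.2) = 0).

Definition dissipative_weak_solution (u ux : R -> R -> R) : Prop :=
  weak_solution u ux /\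
  (exists c : R, forall t, 0 < t -> {ae mu, forall x, ux t x <= c * (1 + t^-1)}) /\
  (forall t, 0 < t -> H1norm (u t) (ux t) <= H1norm (u 0) (ux 0)).

Definition uTb (u : R -> R -> R) (T : R) : R -> R -> R := fun t x => - u (T - t) x.
Definition uTbx (ux : R -> R -> R) (T : R) : R -> R -> R := fun t x => - ux (T - t) x.

(* A characteristic g of v (with weak x-derivative vx) from g0 on [0,T], in the
   (Caratheodory) integral form of  g' = v(t,g),  d/dt v(t,g(t)) = - P_x(t,g(t)). *)
Definition characteristic (v vx : R -> R -> R) (T g0 : R) (g : R -> R) : Prop :=
  g 0 = g0 /\
  {within `[0, T], continuous g} /\
  mu.-integrable `[0, T] (fun s => (v s (g s))%:E) /\
  mu.-integrable `[0, T] (fun s => (Px v vx s (g s))%:E) /\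
  (forall t, t \in `[0, T] ->
     g t = g0 + \int[mu]_(s in `[0, t]) v s (g s)) /\
  (forall t, t \in `[0, T] ->
     v t (g t) = v 0 g0 - \int[mu]_(s in `[0, t]) Px v vx s (g s)).

Definition unique_forwards (v vx : R -> R -> R) (T g0 : R) : Prop :=
  forall g1 g2, characteristic v vx T g0 g1 -> characteristic v vx T g0 g2 ->
    forall t, t \in `[0, T] -> g1 t = g2 t.

Definition omega (v : R -> R -> R) (g k : R -> R) (s : R) : R :=
  (v s (k s) - v s (g s)) / (k s - g s).

Definition GammaK (v vx : R -> R -> R) (T K : R) : set R :=
  [set g0 | derivable (v 0) g0 1 /\
    forall g, characteristic v vx T g0 g ->
    forall k0, 0 < `|k0 - g0| < K^-1 ->
    forall k, characteristic v vx T k0 k ->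
    forall s, s \in `[0, T] -> - K <= omega v g k s].

Definition Gamma (v vx : R -> R -> R) (T : R) : set R :=
  \bigcup_(K in [set K : R | 1 <= K]) GammaK v vx T K.

End CH.

From HB Require Import structures.
From mathcomp Require Import all_boot all_order all_algebra.
From mathcomp Require Import all_classical all_reals all_analysis.
From mathcomp Require Import ring lra.
Import Order.TTheory GRing.Theory Num.Theory.
Import numFieldNormedType.Exports.
Local Open Scope classical_set_scope.
Local Open Scope ring_scope.

(* If the characteristics from [x] are not unique, two of them separate, so some
   rational point [(tq, q)] of the (t, x)-plane lies strictly between them. For
   [x < y] in [GammaK K] with [y - x < 1/K], the bound [omega >= -K] makes the gap
   [d = k - g] between characteristics from [x] and from [y] satisfy
   [d(t) = d(0) + \int_0^t f] with [f >= -K d], so by a Gronwall argument every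
   characteristic from [x] stays below every characteristic from [y], and [(tq, q)]
   cannot lie between two characteristics from [y]. Hence [K], the cell of the grid
   of mesh [1/K] containing [x], and [(tq, q)] determine [x]: the exceptional set is
   countable, hence Lebesgue-null. *)

Section IntegralEquation.
Context {R : realType}.
Local Notation mu := (@lebesgue_measure R).

Lemma within_itv_continuous_dist_lt {f : R -> R} {a b x e : R} :
  {within `[a, b], continuous f} -> x \in `[a, b] -> 0 < e ->
  exists2 dl, 0 < dl & forall s, s \in `[a, b] -> `|x - s| < dl -> `|f x - f s| < e.
Proof.
move=> /subspace_continuousP cf xab e0.
have /nbhs_ballP[dl dl0 fx] : nbhs x (fun s => s \in `[a, b] -> `|f x - f s| < e).
  exact: (@cvgr_dist_lt R R^o _ _ _ _ _ (cf x xab) _ e0).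
by exists dl => // s sab xs; apply: fx.
Qed.

Lemma within_itv_first_root {d : R -> R} {T t : R} :
  {within `[0, T], continuous d} -> 0 < d 0 -> t \in `[0, T] -> d t <= 0 ->
  exists ts, [/\ ts \in `[0, T], 0 < ts, d ts = 0 & forall s, 0 <= s < ts -> 0 < d s].
Proof.
move=> cd d0 tT dt0; have := tT; rewrite in_itv /= => /andP[t0 tTle].
pose Z := [set s | s \in `[0, T] /\ d s <= 0].
have lbZ : lbound Z 0 by move=> z [+ _]; rewrite in_itv /= => /andP[].
have hinf : has_inf Z by split; [exists t | exists 0].
set ts := inf Z.
have ts0 : 0 <= ts by apply: lb_le_inf => //; exists t.
have tst : ts <= t by apply: ge_inf => //; exists 0.
have tsT : ts \in `[0, T] by rewrite in_itv /= ts0 (le_trans tst).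
have pos s : 0 <= s < ts -> 0 < d s.
  move=> /andP[s0 sts]; rewrite ltNge; apply/negP => ds0.
  have Zs : Z s by split; rewrite // in_itv /= s0 (le_trans (ltW sts)) // (le_trans tst).
  by move: sts; rewrite ltNge (ge_inf (ex_intro _ 0 lbZ) Zs).
have dts_le0 : d ts <= 0.
  rewrite leNgt; apply/negP => dpos.
  have [dl dl0 near_ts] := within_itv_continuous_dist_lt cd tsT dpos.
  have [z [zT dz] zlt] := inf_adherent dl0 hinf.
  have tsz : ts <= z by apply: ge_inf => //; exists 0.
  have := near_ts z zT; rewrite distrC ger0_norm ?subr_ge0 // ltrBlDl => /(_ zlt).
  by rewrite ltr_norml => /andP[_]; lra.
have dts0 : d ts = 0.
  apply/eqP; rewrite eq_le dts_le0 leNgt; apply/negP => dneg.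
  have cd0 : {within `[0, ts], continuous d}.
    by apply: continuous_subspaceW cd; apply: subset_itvl; rewrite bnd_simp (le_trans tst).
  have [|c] := IVT ts0 cd0 (v := 0).
    by rewrite ge_min le_max (ltW dneg) (ltW d0) orbT.
  rewrite in_itv /= => /andP[c0]; rewrite le_eqVlt => /orP[/eqP -> | cts] dc0; first lra.
  by move: (pos c); rewrite c0 cts dc0 => /(_ isT); lra.
exists ts; split => //; rewrite lt_neqAle ts0 andbT; apply/eqP => ts_eq0.
by move: d0; rewrite ts_eq0 dts0; lra.
Qed.

Lemma Rintegral_itv_oc_ge_cst (f : R -> R) (a b c : R) : a <= b ->
  mu.-integrable `]a, b] (EFin \o f) -> (forall x, x \in `]a, b] -> c <= f x) ->
  c * (b - a) <= \int[mu]_(x in `]a, b]) f x.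
Proof.
move=> ab fi cf.
have mu_ab : mu `]a, b] = (b - a)%:E.
  rewrite lebesgue_measure_itv /= lte_fin -EFinD.
  by case: ltgtP ab => // -> _; rewrite subrr.
have <- : \int[mu]_(x in `]a, b]) c = c * (b - a).
  by rewrite Rintegral_cst //; congr (_ * _); exact: (congr1 fine mu_ab).
apply: le_Rintegral => //.
apply: measurable_bounded_integrable => //; last exact: bounded_cst.
by change (mu `]a, b] < +oo)%E; rewrite mu_ab ltry.
Qed.

Lemma Rintegral_equationB {d f : R -> R} {T a b : R} :
  mu.-integrable `[0, T] (EFin \o f) ->
  (forall t, t \in `[0, T] -> d t = d 0 + \int[mu]_(s in `[0, t]) f s) ->
  0 <= a -> a <= b -> b <= T -> d b - d a = \int[mu]_(s in `]a, b]) f s.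
Proof.
move=> fi dE a0 ab bT.
have inT t : 0 <= t -> t <= T -> t \in `[0, T] by move=> *; rewrite in_itv /=; apply/andP.
have fi0b : mu.-integrable `[0, b] (EFin \o f).
  by apply: integrableS fi => //; apply: subset_itvl; rewrite bnd_simp.
have := @Rintegral_itvB _ f (BLeft 0) (BRight b) a fi0b; rewrite !bnd_simp => <- //.
by rewrite (dE b) ?(dE a) ?inT ?(le_trans a0 ab) ?(le_trans ab bT) //; lra.
Qed.

(* At a first zero [ts] of [d], let [tau] maximise [d] on a window of length
   [1/(2n)] before [ts]: integrating [f >= -n d(tau)] from [tau] to [ts] shows that
   [d] falls by at most [d(tau)/2] there, so it cannot reach 0. *)
Lemma integral_equation_pos {d f : R -> R} {T n : R} :
  0 < n -> 0 < d 0 -> {within `[0, T], continuous d} ->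
  mu.-integrable `[0, T] (EFin \o f) ->
  (forall t, t \in `[0, T] -> d t = d 0 + \int[mu]_(s in `[0, t]) f s) ->
  (forall s, s \in `[0, T] -> 0 <= d s -> - n * d s <= f s) ->
  forall t, t \in `[0, T] -> 0 < d t.
Proof.
move=> n0 d0 cd fi dE fge t tT; rewrite ltNge; apply/negP => dt0.
have [ts [tsT ts0 dts0 pos]] := within_itv_first_root cd d0 tT dt0.
have := tsT; rewrite in_itv /= => /andP[_ tsTle].
pose a := Num.max 0 (ts - (2 * n)^-1).
have a0 : 0 <= a by rewrite le_max lexx.
have ats : a < ts by rewrite gt_max ts0 /= ltrBlDr ltrDl invr_gt0 mulr_gt0.
have aL : ts - (2 * n)^-1 <= a by rewrite le_max lexx orbT.
have sub : `[a, ts] `<=` `[0, T].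
  by move=> z /=; rewrite !in_itv /= => /andP[az zts]; rewrite (le_trans a0) ?(le_trans zts).
have [tau tauI dmax] := EVT_max (ltW ats) (continuous_subspaceW sub cd).
have := tauI; rewrite in_itv /= => /andP[atau tauts].
have dtau_pos : 0 < d tau.
  by apply: lt_le_trans (dmax a _); [apply: pos; rewrite a0 | rewrite in_itv /= lexx ltW].
have lower : - n * d tau * (ts - tau) <= \int[mu]_(s in `]tau, ts]) f s.
  apply: Rintegral_itv_oc_ge_cst => //.
    apply: integrableS fi => //; apply: subset_itvScc; rewrite bnd_simp //.
    exact: le_trans a0 atau.
  move=> z; rewrite in_itv /= => /andP[tauz zts].
  have zI : z \in `[a, ts] by rewrite in_itv /= zts (le_trans atau (ltW tauz)).
  have dz0 : 0 <= d z.
    move: zts; rewrite le_eqVlt => /orP[/eqP -> | zts]; first by rewrite dts0.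
    by apply/ltW/pos; rewrite zts (le_trans a0 (le_trans atau (ltW tauz))).
  have := fge z (sub z zI) dz0; have := dmax z zI; nra.
have := Rintegral_equationB fi dE (le_trans a0 atau) tauts tsTle; rewrite dts0.
have short : n * (ts - tau) <= 2^-1.
  have -> : 2^-1 = n * (2 * n)^-1 by field; lra.
  by rewrite ler_wpM2l ?(ltW n0) //; lra.
nra.
Qed.

Lemma within_itv_continuous_pos_rat {h : R -> R} {a b t : R} : a < b ->
  {within `[a, b], continuous h} -> t \in `[a, b] -> 0 < h t ->
  exists2 q : rat, ratr q \in `[a, b] & 0 < h (ratr q).
Proof.
move=> ab ch tab ht.
have [dl dl0 near_t] := within_itv_continuous_dist_lt ch tab ht.
have := tab; rewrite in_itv /= => /andP[ta tb].
have lohi : Num.max a (t - dl) < Num.min b (t + dl).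
  by rewrite gt_max !lt_min ab /=; apply/and3P; split; lra.
have [q] := rat_in_itvoo lohi.
rewrite in_itv /= gt_max lt_min => /andP[/andP[aq tq] /andP[qb qt]].
have qab : ratr q \in `[a, b] by rewrite in_itv /= !ltW.
exists q => //.
have : `|t - ratr q| < dl by rewrite ltr_norml; apply/andP; split; lra.
by move=> /(near_t _ qab); rewrite ltr_norml => /andP[_]; lra.
Qed.

End IntegralEquation.

Lemma floor_eq_dist_lt {R : archiRealFieldType} {x y : R} :
  Num.floor x = Num.floor y -> `|x - y| < 1.
Proof.
move=> fxy; have := floor_itv x; have := floor_itv y.
rewrite -fxy intrD => /andP[yl yu] /andP[xl xu].
by rewrite ltr_norml; apply/andP; split; lra.
Qed.

Section Characteristics.
Context {R : realType}.
Variables (v vx : R -> R -> R) (T : R).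
Local Notation mu := (@lebesgue_measure R).
Local Notation char := (characteristic v vx T).

Lemma characteristic_lt {g0 k0 K : R} {g k : R -> R} :
  0 < K -> g0 < k0 -> char g0 g -> char k0 k ->
  (forall s, s \in `[0, T] -> - K <= omega v g k s) ->
  forall t, t \in `[0, T] -> g t < k t.
Proof.
move=> K0 gk [g00 [gc [gi [_ [gE _]]]]] [k00 [kc [ki [_ [kE _]]]]] om t tT.
have fi : mu.-integrable `[0, T] (EFin \o (fun s => v s (k s) - v s (g s))).
  exact: (eq_integrable _ _ _ _ (integrableB _ ki gi)).
rewrite -subr_gt0; apply: (integral_equation_pos (d := fun s => k s - g s) K0 _ _ fi) => //.
- by rewrite g00 k00 subr_gt0.
- exact: within_continuousB.
- move=> s sT; have := sT; rewrite in_itv /= => /andP[s0 sTle].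
  have sub : `[0, s] `<=` `[0, T] by apply: subset_itvl; rewrite bnd_simp.
  rewrite (kE s sT) (gE s sT) g00 k00 RintegralB //=; first lra.
  + exact: integrableS ki.
  + exact: integrableS gi.
- move=> s sT; rewrite le_eqVlt => /orP[/eqP kg | kg]; last first.
    by rewrite -ler_pdivlMr //; exact: om.
  have -> : k s = g s by apply/eqP; rewrite -subr_eq0 -kg.
  by rewrite !subrr mulr0.
Qed.

Lemma GammaK_le {K N x : R} : 0 < K -> K <= N -> GammaK v vx T K x -> GammaK v vx T N x.
Proof.
move=> K0 KN [dv omK]; split => // g cg k0 /andP[k0x k0N] k ck s sT.
have N0 : 0 < N := lt_le_trans K0 KN.
apply: le_trans (omK g cg k0 _ k ck s sT); first by rewrite lerN2.
by rewrite k0x (lt_le_trans k0N) // lef_pV2 ?posrE.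
Qed.

Lemma not_unique_forwards_lt {x : R} : ~ unique_forwards v vx T x ->
  exists g1 g2 t, [/\ char x g1, char x g2, t \in `[0, T] & g1 t < g2 t].
Proof.
apply: contra_notP => nolt g1 g2 c1 c2 t tT.
case: (ltgtP (g1 t) (g2 t)) => // lt; exfalso; apply: nolt.
  by exists g1, g2, t.
by exists g2, g1, t.
Qed.

Definition branching_code (x : R) (c : nat * int * rat * rat) : Prop :=
  let: (n, m, tq, q) := c in
  [/\ GammaK v vx T n.+1%:R x, Num.floor (x * n.+1%:R) = m, ratr tq \in `[0, T] &
      exists g1 g2, [/\ char x g1, char x g2, g1 (ratr tq) < ratr q & ratr q < g2 (ratr tq)]].

Lemma branching_code_inj {x y : R} {c} : branching_code x c -> branching_code y c -> x = y.
Proof.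
wlog xy : x y / x < y => [hwlog cx cy|].
  by case: (ltgtP x y) => // xy; [apply: hwlog | apply/esym/hwlog].
case: c => [[[n m] tq] q] /= [[_ omx] fx tT [g1 [g2 [_ c2 _ qg2]]]] [_ fy _ [k1 [_ [d1 _ k1q _]]]].
have N0 : 0 < n.+1%:R :> R by rewrite ltr0n.
have xy_close : 0 < `|y - x| < n.+1%:R^-1.
  have := floor_eq_dist_lt (etrans fy (esym fx)).
  rewrite -mulrBl normrM (gtr0_norm N0) -ltr_pdivlMr // mul1r => ->.
  by rewrite normr_gt0 subr_eq0 gt_eqF.
have := characteristic_lt N0 xy c2 d1 (omx g2 c2 y xy_close k1 d1) _ tT; lra.
Qed.

Lemma branching_code_exists {x : R} : 0 < T -> x \in Gamma v vx T ->
  ~ unique_forwards v vx T x -> exists c, branching_code x c.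
Proof.
rewrite in_setE => T0 -[K /= K1 GK] /not_unique_forwards_lt[g1 [g2 [t [c1 c2 tT g12]]]].
have KN : K <= (Num.trunc K).+1%:R by rewrite ltW // -truncn_lt_nat // (le_trans ler01).
have cg12 : {within `[0, T], continuous (fun s => g2 s - g1 s)}.
  by apply: within_continuousB; [case: c2 => _ [] | case: c1 => _ []].
have [tq tqT] := within_itv_continuous_pos_rat T0 cg12 tT (etrans (subr_gt0 _ _) g12).
rewrite subr_gt0 => /rat_in_itvoo[q]; rewrite in_itv /= => /andP[g1q qg2].
exists ((Num.trunc K)%N, Num.floor (x * (Num.trunc K).+1%:R), tq, q); split => //.
  exact: GammaK_le (lt_le_trans ltr01 K1) KN GK.
by exists g1, g2.
Qed.

Lemma countable_not_unique_forwards : 0 < T ->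
  countable [set x | x \in Gamma v vx T /\ ~ unique_forwards v vx T x].
Proof.
move=> T0; set B := [set x | _]; apply/countable_injP.
have codable x : exists c, B x -> branching_code x c.
  have [[xG xnu]|nBx] := pselect (B x); last by exists (0%N, 0%Z, 0%Q, 0%Q) => /nBx.
  by have [c xc] := branching_code_exists T0 xG xnu; exists c.
have [code codeP] := choice codable.
exists (pickle \o code) => x y; rewrite !in_setE => Bx By /(pcan_inj pickleK) cxy.
by apply: (branching_code_inj (codeP x Bx)); rewrite cxy; exact: codeP.
Qed.

End Characteristics.

Theorem lemma5p5 (R : realType) (u ux : R -> R -> R) (T : R) :
  dissipative_weak_solution u ux ->
  0 < T -> 8 * T * Num.sqrt (CH_C u ux) < pi ->
  (@lebesgue_measure R).-negligible
    [set g0 | g0 \in Gamma (uTb u T) (uTbx ux T) T /\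
              ~ unique_forwards (uTb u T) (uTbx ux T) T g0].
Proof.
move=> _ T0 _; set B := [set g0 | _].
have B_countable : countable B := countable_not_unique_forwards _ _ _ T0.
exists B; split => //.
- by apply: countable_measurable B_countable => t; exact: measurable_set1.
- exact: countable_lebesgue_measure0 B_countable.
Qed.
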